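(* Let $\bar b>0$, $0<\epsilon<1$, and suppose $w/6\le \bar w\le 6w$. Then for every edge $e$, the expected number of queries and the expected running time of $\mathrm{Heavy}(e,\bar b,\bar w,\epsilon,m)$ are $O\!\left(\frac{\bar w\sqrt m}{\bar b}\cdot \mathrm{poly}(\log n,1/\epsilon)\right)$.
   Context: Let $G=(V,E)$ be a bipartite graph with bipartition $V=U\cup L$, $n=|V|$, $m=|E|$; $N(v)$ is the neighbor set and $d_v=|N(v)|$ the degree of $v$; for an edge $e=(u,v)$, $d_e=d_u+d_v-2$; $w$ is the number of wedges (paths with two edges) in $G$. A butterfly is a set of four distinct vertices $\{u_1,u_2,v_1,v_2\}$, $u_i\in U$, $v_i\in L$, with all four pairs $u_iv_j$ edges. Fix an arbitrary order $\pi$ of $V$ and write $x\prec z$ if $d_x<d_z$, or $d_x=d_z$ and $x$ precedes $z$ in $\pi$. Access to $G$ is via degree queries, neighbor queries (the $i$-th neighbor of $v$), vertex-pair queries and uniform edge sampling, each costing one query. Procedure $\mathrm{Heavy}(e=(u,v),\bar b,\bar w,\epsilon,m)$: if $\bar w<(\epsilon\bar b)^{1/4}d_e$, return heavy. Otherwise, for $i=1,\dots,t=48\log(2m)$: for $j=1,\dots,s=12\sqrt m\,\bar w/(\epsilon^2\bar b)$: choose $p\in\{u,v\}$ with probability $(d_p-1)/d_e$, let $q$ be the other endpoint of $e$, choose $x_j$ uniformly from $N(p)\setminus\{q\}$ (wedge $(q,p,x_j)$); let $y_j$ be the one of $q,x_j$ with smaller degree; set $R=\lceil d_{y_j}/\sqrt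 m\rceil$; for $k=1,\dots,R$ sample $z$ uniformly from $N(y_j)$ and set $Z_k=d_{y_j}$ if $\{q,p,x_j,z\}$ is a butterfly and $x_j\prec z$, else $Z_k=0$; set $Y_j=\frac1R\sum_kZ_k$. Set $X_i=\frac1s\sum_jY_j$. Return heavy if the median $X$ of the $X_i$ exceeds $\bar b^{3/4}/\epsilon^{1/4}$, light otherwise. *)

From HB Require Import structures.
From mathcomp Require Import all_boot all_order all_algebra.
From mathcomp Require Import reals exp.
Set Implicit Arguments. Unset Strict Implicit. Unset Printing Implicit Defensive.
Import Order.TTheory GRing.Theory Num.Theory.
Local Open Scope ring_scope.

(* A computation is a finite list of outcomes                         *)
(*   (probability weight, value, (#queries, #time steps)).            *)
Section Dist.
Variable R : realType.

Definition dist (A : Type) := seq (R * A * (nat * nat)).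

Definition dret (A : Type) (a : A) : dist A := [:: (1, a, (0%N, 0%N))].

Definition dbind (A B : Type) (d : dist A) (f : A -> dist B) : dist B :=
  flatten (map (fun x =>
    map (fun y => (x.1.1 * y.1.1, y.1.2, (x.2.1 + y.2.1, x.2.2 + y.2.2)%N))
        (f x.1.2)) d).

Definition dtick (q tm : nat) : dist unit := [:: (1, tt, (q, tm))].

Definition dbern (p : R) : dist bool :=
  [:: (p, true, (0%N, 0%N)); (1 - p, false, (0%N, 0%N))].

Definition dunif (A : Type) (s : seq A) : dist (option A) :=
  if s is [::] then dret None
  else map (fun x => ((size s)%:R^-1, Some x, (0%N, 0%N))) s.

Fixpoint drepeat (A : Type) (n : nat) (c : dist A) : dist (seq A) :=
  match n with
  | 0%N => dret [::]
  | n'.+1 => dbind c (fun a => dbind (drepeat n' c) (fun l => dret (a :: l)))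
  end.

Definition exp_queries (A : Type) (d : dist A) : R :=
  \sum_(x <- d) x.1.1 * (x.2.1)%:R.

Definition exp_time (A : Type) (d : dist A) : R :=
  \sum_(x <- d) x.1.1 * (x.2.2)%:R.

Definition natceil (x : R) : nat := `|Num.ceil x|%N.

Definition mean (s : seq R) : R :=
  if s is [::] then 0 else (\sum_(z <- s) z) / (size s)%:R.

Definition median (s : seq R) : R :=
  nth 0 (sort (fun x y : R => x <= y) s) ((size s).-1./2).

End Dist.

Section Graph.
Variables (V : finType) (adj : rel V).

Definition bipartite_graph (U : {set V}) : Prop :=
  symmetric adj /\ irreflexive adj /\
  (forall x y, adj x y -> (x \in U) != (y \in U)).

Definition nbhd (v : V) : {set V} := [set y | adj v y].
Definition deg (v : V) : nat := #|nbhd v|.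

Definition nedges : nat := ((\sum_(v : V) deg v)./2)%N.
(* w = number of wedges (paths with two edges) *)
Definition nwedges : nat := (\sum_(v : V) 'C(deg v, 2))%N.

Definition butterfly (U : {set V}) (S : {set V}) : bool :=
  [&& #|S| == 4%N, #|S :&: U| == 2%N &
      [forall a in S :&: U, forall b in S :\: U, adj a b]].

Definition prec (pi : V -> nat) (x z : V) : bool :=
  (deg x < deg z)%N || ((deg x == deg z) && (pi x < pi z)%N).

(* Query accounting: every degree / neighbor / vertex-pair query      *)
(* costs one query and one time step; other O(1) work costs time.     *)
Variables (R : realType) (U : {set V}) (pi : V -> nat).

(* one sample Z_k : neighbor query of y, vertex-pair query (the
   missing edge of the butterfly), degree query of z *)
Definition heavyZ (m : nat) (q p x y : V) : dist R R :=
  dbind (dtick R 3 4) (fun _ =>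
  dbind (dunif R (enum (nbhd y))) (fun oz =>
  dret R (match oz with
          | Some z => if butterfly U [set q; p; x; z] && prec pi x z
                      then (deg y)%:R else 0
          | None => 0
          end))).

Definition heavyYcore (m : nat) (q p x : V) : dist R R :=
  let y := if (deg x < deg q)%N then x else q in
  let Rk := natceil ((deg y)%:R / Num.sqrt (m%:R : R)) in
  dbind (drepeat Rk (heavyZ m q p x y)) (fun zs =>
  dbind (dtick R 0 1) (fun _ => dret R (mean zs))).

(* one Y_j: choose p, sample x (neighbor query), query deg x *)
Definition heavyY (m : nat) (u v : V) : dist R R :=
  let de := (deg u + deg v - 2)%N in
  dbind (dtick R 0 1) (fun _ =>
  dbind (dbern ((deg u).-1%:R / de%:R)) (fun b =>
  let p := if b then u else v in
  let q := if b then v else u in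
  dbind (dtick R 2 2) (fun _ =>
  dbind (dunif R (enum (nbhd p :\ q))) (fun ox =>
  match ox with
  | Some x => heavyYcore m q p x
  | None => dret R 0
  end)))).

Definition heavyX (m s : nat) (u v : V) : dist R R :=
  dbind (drepeat s (heavyY m u v)) (fun ys =>
  dbind (dtick R 0 1) (fun _ => dret R (mean ys))).

(* Heavy: returns true for "heavy", false for "light".  Degree queries
   for u and v; median computation charged t*t time steps. *)
Definition Heavy (u v : V) (bb wb eps : R) (m : nat) : dist R bool :=
  dbind (dtick R 2 3) (fun _ =>
  let de := (deg u + deg v - 2)%N in
  if wb < powR (eps * bb) (4%:R^-1) * de%:R then dret R true else
  let t := natceil (48%:R * ln (2%:R * (m%:R : R))) in
  let s := natceil (12%:R * Num.sqrt (m%:R : R) * wb / (eps ^+ 2 * bb)) in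
  dbind (drepeat t (heavyX m s u v)) (fun xs =>
  dbind (dtick R 0 (t * t)) (fun _ =>
  dret R (powR bb (3%:R / 4%:R) / powR eps (4%:R^-1) < median xs)))).

End Graph.

From HB Require Import structures.
From mathcomp Require Import all_boot all_order all_algebra.
From mathcomp Require Import reals exp.
From mathcomp Require Import ring lra zify.
Import Order.TTheory GRing.Theory Num.Theory.
Local Open Scope ring_scope.
Set Implicit Arguments. Unset Strict Implicit.

(* Expected costs add up along [dbind], so every stage of Heavy costs its own
   ticks plus the expected cost of what follows it.  The only stage whose cost
   is not a constant is the number R = ceil(d_y / sqrt m) of samples of Z.
   Over the d_e wedges through e = (u, v), the degrees d_y = min(d_x, d_q) sum
   to at most min(d_e (d_e + 1), 6 m) <= 6 d_e sqrt m, and Y_j picks a wedge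
   uniformly, so E[R] = O(1) and every Y_j costs O(1).  Heavy then runs
   t = O(log n) rounds of s = O(sqrt m wb / (eps^2 bb)) samples Y_j, and the
   median costs t^2 more. *)

Section CostCalculus.
Variables (R : realType) (c : nat * nat -> nat).
Hypothesis c_additive :
  forall a1 a2 b1 b2, c (a1 + b1, a2 + b2)%N = (c (a1, a2) + c (b1, b2))%N.

Definition mass A (d : dist R A) : R := \sum_(x <- d) x.1.1.
Definition expect A (d : dist R A) (g : A -> R) : R := \sum_(x <- d) x.1.1 * g x.1.2.

(* [c] weighs the (queries, time) counters of an outcome: [fst] gives
   [exp_queries] and [snd] gives [exp_time]. *)
Definition exp_cost A (d : dist R A) : R := \sum_(x <- d) x.1.1 * (c x.2)%:R.

Lemma cost00 : c (0, 0)%N = 0%N.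
Proof. by have := c_additive 0 0 0 0; rewrite addn0; lia. Qed.

Lemma eq_expect A (d : dist R A) g h : g =1 h -> expect d g = expect d h.
Proof. by move=> gh; apply: eq_bigr => x _; rewrite gh. Qed.

Lemma expect_cst A (d : dist R A) k : expect d (fun _ => k) = mass d * k.
Proof. by rewrite /expect /mass mulr_suml. Qed.

Lemma mass_dbind A B (d : dist R A) (f : A -> dist R B) :
  mass (dbind d f) = expect d (fun a => mass (f a)).
Proof.
rewrite /mass /expect /dbind big_flatten big_map /=; apply: eq_bigr => x _.
by rewrite big_map mulr_sumr.
Qed.

Lemma mass_dbind1 A B (d : dist R A) (f : A -> dist R B) :
  mass d = 1 -> (forall a, mass (f a) = 1) -> mass (dbind d f) = 1.
Proof. by move=> d1 f1; rewrite mass_dbind (eq_expect _ f1) expect_cst d1 mulr1. Qed.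

Lemma exp_cost_dbind A B (d : dist R A) (f : A -> dist R B) :
  (forall a, mass (f a) = 1) ->
  exp_cost (dbind d f) = exp_cost d + expect d (fun a => exp_cost (f a)).
Proof.
move=> f1; rewrite /exp_cost /expect /dbind big_flatten big_map -big_split /=.
apply: eq_bigr => -[[w a] [q t]] _ /=.
have -> : w * (c (q, t))%:R = w * (c (q, t))%:R * mass (f a) by rewrite f1 mulr1.
rewrite /mass big_map !mulr_sumr -big_split /=.
apply: eq_bigr => -[[w' b] [q' t']] _ /=.
by rewrite c_additive natrD; ring.
Qed.

Lemma exp_cost_dbind_cst A B (d : dist R A) (f : A -> dist R B) k :
  mass d = 1 -> (forall a, mass (f a) = 1) -> (forall a, exp_cost (f a) = k) ->
  exp_cost (dbind d f) = exp_cost d + k.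
Proof.
by move=> d1 f1 fk; rewrite exp_cost_dbind // (eq_expect _ fk) expect_cst d1 mul1r.
Qed.

Lemma mass_dret A (a : A) : mass (dret R a) = 1.
Proof. by rewrite /mass big_seq1. Qed.

Lemma exp_cost_dret A (a : A) : exp_cost (dret R a) = 0.
Proof. by rewrite /exp_cost big_seq1 cost00 mulr0. Qed.

Lemma mass_dtick q t : mass (dtick R q t) = 1.
Proof. by rewrite /mass big_seq1. Qed.

Lemma exp_cost_dtick q t : exp_cost (dtick R q t) = (c (q, t))%:R.
Proof. by rewrite /exp_cost big_seq1 mul1r. Qed.

Lemma exp_cost_dtick_bind A q t (f : unit -> dist R A) :
  mass (f tt) = 1 -> exp_cost (dbind (dtick R q t) f) = (c (q, t))%:R + exp_cost (f tt).
Proof.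
by move=> f1; rewrite exp_cost_dbind ?exp_cost_dtick /expect ?big_seq1 ?mul1r // => -[].
Qed.

Lemma mass_dbern p : mass (dbern p) = 1.
Proof. by rewrite /mass !big_cons big_nil /=; ring. Qed.

Lemma exp_cost_dbern p : exp_cost (dbern p) = 0.
Proof. by rewrite /exp_cost !big_cons big_nil /= cost00; ring. Qed.

Lemma expect_dbern p g : expect (dbern p) g = p * g true + (1 - p) * g false.
Proof. by rewrite /expect !big_cons big_nil /= addr0. Qed.

Lemma mass_dunif A (s : seq A) : mass (dunif R s) = 1.
Proof.
case: s => [|a s]; first exact: mass_dret.
rewrite /mass /dunif big_map big_const_seq count_predT iter_addr_0.
by rewrite -[LHS]mulr_natr mulVf // pnatr_eq0.
Qed.

Lemma exp_cost_dunif A (s : seq A) : exp_cost (dunif R s) = 0.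
Proof.
case: s => [|a s]; first exact: exp_cost_dret.
by rewrite /exp_cost big_map big1 // => x _; rewrite cost00 mulr0.
Qed.

Lemma card_mul_expect_dunif (T : finType) (S : {set T}) g :
  #|S|%:R * expect (dunif R (enum S)) g = \sum_(x in S) g (Some x).
Proof.
rewrite -big_enum cardE /expect /dunif.
case: (enum S) => [|a s]; first by rewrite big_nil mul0r.
by rewrite big_map -mulr_sumr mulVKf // pnatr_eq0.
Qed.

Lemma mass_drepeat A n (d : dist R A) : mass d = 1 -> mass (drepeat n d) = 1.
Proof.
move=> d1; elim: n => [|n IH] /=; first exact: mass_dret.
by apply: mass_dbind1 => // a; apply: mass_dbind1 => // l; apply: mass_dret.
Qed.

Lemma exp_cost_drepeat A n (d : dist R A) :
  mass d = 1 -> exp_cost (drepeat n d) = n%:R * exp_cost d.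
Proof.
move=> d1; elim: n => [|n IH] /=; first by rewrite exp_cost_dret mul0r.
rewrite (exp_cost_dbind_cst (k := n%:R * exp_cost d)) // => [|a|a].
- by rewrite mulrSr mulrDl mul1r addrC.
- by apply: mass_dbind1 => [|l]; [apply: mass_drepeat | apply: mass_dret].
by rewrite (exp_cost_dbind_cst (k := 0)) ?IH ?addr0 // => *;
  [apply: mass_drepeat | apply: mass_dret | apply: exp_cost_dret].
Qed.

End CostCalculus.

Lemma natceil_le (R : realType) (x : R) : 0 <= x -> (natceil x)%:R <= x + 1.
Proof.
move=> x0; rewrite /natceil natr_absz ger0_norm; last by rewrite ceil_ge0; lra.
by have /andP[+ _] := ceil_itv x; rewrite intrD; lra.
Qed.

Lemma le_mul_of_quad_bounds (R : realFieldType) (T D r : R) :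
  1 <= r -> 0 <= D -> T <= D * (D + 1) -> T <= 6 * r ^+ 2 -> T <= 6 * D * r.
Proof. by move=> r1 D0 TD Tr; case: (lerP r D) => rD; nra. Qed.

Lemma mixture_of_averages (R : realFieldType) (a b : nat) (k Ea Eb : R) :
  (b = 0%N -> Eb = 0) ->
  a%:R / (a + b)%:R * (k + Ea) + (1 - a%:R / (a + b)%:R) * (k + Eb)
    = k + (a%:R * Ea + b%:R * Eb) / (a + b)%:R.
Proof.
move=> Eb0; have [/eqP|ab_gt0] := posnP (a + b).
  rewrite addn_eq0 => /andP[/eqP-> /eqP b0].
  by rewrite b0 Eb0 // addn0 !mulr0n invr0 !mulr0 !mul0r add0r subr0 mul1r.
by rewrite natrD; field; rewrite -natrD pnatr_eq0 -lt0n.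
Qed.

Section Degrees.
Variables (V : finType) (adj : rel V).
Local Notation deg := (deg adj).

Lemma sum_deg_le_nedges : (\sum_v deg v <= 2 * nedges adj + 1)%N.
Proof. by rewrite /nedges; lia. Qed.

Lemma deg_gt0 u v : adj u v -> (0 < deg u)%N.
Proof. by move=> huv; apply/card_gt0P; exists v; rewrite inE. Qed.

Lemma nedges_gt0 u v :
  symmetric adj -> irreflexive adj -> adj u v -> (0 < nedges adj)%N.
Proof.
move=> sym irr huv; have vu : adj v u by rewrite sym.
have nuv : u != v by apply: contraTneq huv => ->; rewrite irr.
have : (deg u + deg v <= \sum_x deg x)%N.
  by rewrite (bigD1 u) // (bigD1 v) 1?eq_sym //= addnA leq_addr.
by have := deg_gt0 huv; have := deg_gt0 vu; rewrite /nedges; lia.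
Qed.

Lemma double_nedges_le : (2 * nedges adj <= #|V| ^ 2)%N.
Proof.
have : (\sum_v deg v <= #|V| * #|V|)%N.
  by rewrite -sum_nat_const; apply: leq_sum => v _; apply: max_card.
by rewrite /nedges; lia.
Qed.

Lemma card_nbhd_setD1 u v : adj u v -> #|nbhd adj u :\ v| = (deg u).-1.
Proof. by move=> huv; rewrite [deg u](cardsD1 v) inE huv. Qed.

Definition wedge_min_deg (p q : V) : nat :=
  \sum_(x in nbhd adj p :\ q) minn (deg x) (deg q).

Lemma wedge_min_deg_le (R : realType) u v m :
  symmetric adj -> adj u v -> (0 < m)%N -> (\sum_x deg x <= 3 * m)%N ->
  (wedge_min_deg u v + wedge_min_deg v u)%:R
    <= 6 * (deg u + deg v - 2)%:R * Num.sqrt (m%:R : R).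
Proof.
move=> sym huv m0 hS; have vu : adj v u by rewrite sym.
have le_card p q : (wedge_min_deg p q <= #|nbhd adj p :\ q| * deg q)%N.
  by rewrite -sum_nat_const; apply: leq_sum => x _; apply: geq_minr.
have le_sum p q : (wedge_min_deg p q <= \sum_x deg x)%N.
  rewrite [X in (_ <= X)%N](bigID (mem (nbhd adj p :\ q))) /=.
  by apply: leq_trans (leq_addr _ _); apply: leq_sum => x _; apply: geq_minl.
apply: le_mul_of_quad_bounds; rewrite ?ler0n //.
- by rewrite -{1}sqrtr1 ler_sqrt // ler1n.
- rewrite natr1 -natrM ler_nat.
  have := le_card u v; have := le_card v u; rewrite !card_nbhd_setD1 //.
  have /prednK <- := deg_gt0 huv; have /prednK <- := deg_gt0 vu.
  move: (deg u).-1 (deg v).-1 => a b Tv Tu.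
  have -> : (a.+1 + b.+1 - 2 = a + b)%N by lia.
  by apply: leq_trans (leq_add Tu Tv) _; nia.
- rewrite sqr_sqrtr // -natrM ler_nat.
  by have := le_sum u v; have := le_sum v u; lia.
Qed.

End Degrees.

#[local] Hint Resolve mass_dret mass_dtick mass_dunif mass_drepeat mass_dbind1 : mass.

Section HeavyCost.
Variables (R : realType) (c : nat * nat -> nat).
Hypothesis c_additive :
  forall a1 a2 b1 b2, c (a1 + b1, a2 + b2)%N = (c (a1, a2) + c (b1, b2))%N.
Hypothesis c_le : forall a b, (c (a, b) <= a + b)%N.
Variables (V : finType) (adj : rel V) (U : {set V}) (pi : V -> nat).
Local Notation deg := (deg adj).
Local Notation cost := (exp_cost c).

Lemma cost_le a b : ((c (a, b))%:R : R) <= a%:R + b%:R.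
Proof. by rewrite -natrD ler_nat. Qed.

Lemma mass_heavyZ m q p x y : mass (heavyZ adj R U pi m q p x y) = 1.
Proof. by rewrite /heavyZ; auto with mass. Qed.

Lemma exp_cost_heavyZ m q p x y : cost (heavyZ adj R U pi m q p x y) = (c (3, 4))%:R.
Proof.
rewrite (exp_cost_dtick_bind c_additive); last by auto with mass.
rewrite (exp_cost_dbind_cst c_additive (k := 0)) ?exp_cost_dunif ?addr0 //.
- exact: mass_dunif.
- by move=> ?; apply: mass_dret.
- by move=> ?; apply: exp_cost_dret.
Qed.

Lemma mass_heavyYcore m q p x : mass (heavyYcore adj R U pi m q p x) = 1.
Proof. by rewrite /heavyYcore; auto using mass_heavyZ with mass. Qed.

Lemma exp_cost_heavyYcore_le m q p x : (0 < m)%N ->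
  cost (heavyYcore adj R U pi m q p x)
    <= 8 + 7 * (minn (deg x) (deg q))%:R / Num.sqrt (m%:R : R).
Proof.
move=> m0; have r0 : 0 < Num.sqrt (m%:R : R) by rewrite sqrtr_gt0 ltr0n.
rewrite /heavyYcore (exp_cost_dbind_cst c_additive (k := (c (0, 1))%:R)).
- rewrite (exp_cost_drepeat c_additive) ?mass_heavyZ // exp_cost_heavyZ.
  have -> : deg (if (deg x < deg q)%N then x else q) = minn (deg x) (deg q).
    by rewrite /minn; case: ifP.
  set z := _ / _; have z0 : 0 <= z by rewrite divr_ge0 ?ler0n ?ltW.
  have := natceil_le z0; have := cost_le 3 4; have := cost_le 0 1.
  have : 0 <= ((natceil z)%:R : R) by [].
  rewrite -mulrA -/z; nra.
- exact: mass_drepeat (mass_heavyZ _ _ _ _ _).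
- by auto with mass.
- by move=> zs; rewrite (exp_cost_dtick_bind c_additive) ?exp_cost_dret ?addr0 ?mass_dret.
Qed.

Lemma mass_heavyY m u v : mass (heavyY adj R U pi m u v) = 1.
Proof.
rewrite /heavyY; apply: mass_dbind1 => [|_]; first exact: mass_dtick.
apply: mass_dbind1 => [|b]; first exact: mass_dbern.
apply: mass_dbind1 => [|_]; first exact: mass_dtick.
by apply: mass_dbind1 => [|[x|]]; [exact: mass_dunif | exact: mass_heavyYcore | exact: mass_dret].
Qed.

(* Also for d_e = 0, where both sums are empty and x / 0 = 0. *)
Lemma exp_cost_heavyY m u v : symmetric adj -> adj u v ->
  cost (heavyY adj R U pi m u v) = (c (0, 1))%:R + (c (2, 2))%:R +
    (\sum_(x in nbhd adj u :\ v) cost (heavyYcore adj R U pi m v u x)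
     + \sum_(x in nbhd adj v :\ u) cost (heavyYcore adj R U pi m u v x))
    / (deg u + deg v - 2)%:R.
Proof.
move=> sym huv; have vu : adj v u by rewrite sym.
pose branch p q := dunif R (enum (nbhd adj p :\ q)).
pose wedge p q (ox : option V) :=
  if ox is Some x then heavyYcore adj R U pi m q p x else dret R 0.
pose E p q := expect (branch p q) (fun ox => cost (wedge p q ox)).
have mass_wedge p q ox : mass (wedge p q ox) = 1.
  by case: ox => [x|]; [exact: mass_heavyYcore | exact: mass_dret].
have mass_step p q : mass (dbind (dtick R 2 2) (fun _ => dbind (branch p q) (wedge p q))) = 1.
  by apply: mass_dbind1 => [|_]; [exact: mass_dtick | apply: mass_dbind1 => //; exact: mass_dunif].
have cost_step p q :
    cost (dbind (dtick R 2 2) (fun _ => dbind (branch p q) (wedge p q))) = (c (2, 2))%:R + E p q.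
  rewrite (exp_cost_dtick_bind c_additive); last by apply: mass_dbind1 => //; exact: mass_dunif.
  by rewrite (exp_cost_dbind c_additive) // (exp_cost_dunif _ c_additive) add0r.
have card_E p q : adj p q -> (deg p).-1%:R * E p q =
    \sum_(x in nbhd adj p :\ q) cost (heavyYcore adj R U pi m q p x).
  by move=> pq; rewrite -(card_nbhd_setD1 pq) card_mul_expect_dunif.
have Ev0 : (deg v).-1 = 0%N -> E v u = 0.
  move=> v1; rewrite /E /branch; have -> : nbhd adj v :\ u = set0.
    by apply/cards0_eq; rewrite card_nbhd_setD1.
  by rewrite enum_set0 /expect big_seq1 mul1r (exp_cost_dret _ c_additive).
rewrite /heavyY (exp_cost_dtick_bind c_additive); last first.
  by apply: mass_dbind1 => [|[]]; [exact: mass_dbern | exact: mass_step | exact: mass_step].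
rewrite (exp_cost_dbind c_additive); last by case; apply: mass_step.
rewrite (exp_cost_dbern c_additive) add0r expect_dbern !cost_step -card_E // -card_E //.
have -> : (deg u + deg v - 2 = (deg u).-1 + (deg v).-1)%N.
  by have := deg_gt0 huv; have := deg_gt0 vu; lia.
by rewrite mixture_of_averages ?addrA.
Qed.

Lemma exp_cost_heavyY_le m u v : symmetric adj -> adj u v -> (0 < m)%N ->
  (\sum_x deg x <= 3 * m)%N -> cost (heavyY adj R U pi m u v) <= 55.
Proof.
move=> sym huv m0 hS; have vu : adj v u by rewrite sym.
set r := Num.sqrt (m%:R : R); have r0 : 0 < r by rewrite sqrtr_gt0 ltr0n.
have sum_le p q : adj p q ->
    \sum_(x in nbhd adj p :\ q) cost (heavyYcore adj R U pi m q p x)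
      <= 8 * (deg p).-1%:R + 7 * (wedge_min_deg adj p q)%:R / r.
  move=> pq; apply: le_trans (ler_sum _ (fun x _ => exp_cost_heavyYcore_le q p x m0)) _.
  by rewrite big_split /= sumr_const card_nbhd_setD1 // natr_sum -mulr_suml -mulr_sumr mulr_natr.
have := wedge_min_deg_le R sym huv m0 hS; rewrite -/r natrD.
have := sum_le _ _ huv; have := sum_le _ _ vu.
rewrite exp_cost_heavyY //.
have -> : (deg u + deg v - 2 = (deg u).-1 + (deg v).-1)%N.
  by have := deg_gt0 huv; have := deg_gt0 vu; lia.
set Su := \sum_(x in nbhd adj u :\ v) _; set Sv := \sum_(x in nbhd adj v :\ u) _.
set Tu := (wedge_min_deg adj u v)%:R; set Tv := (wedge_min_deg adj v u)%:R.
move=> Sv_le Su_le T_le; set D := ((deg u).-1 + (deg v).-1)%N.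
have S_le : Su + Sv <= 50 * D%:R.
  have : 7 * Tu / r + 7 * Tv / r <= 42 * D%:R.
    have : (Tu + Tv) / r <= 6 * D%:R by rewrite ler_pdivrMr.
    by rewrite -!mulrA -mulrDr -mulrDl; lra.
  by rewrite /D natrD; lra.
have : (Su + Sv) / D%:R <= 50.
  have [->|D_gt0] := posnP D; first by rewrite invr0 mulr0.
  by rewrite ler_pdivrMr ?ltr0n // mulrC.
by have := cost_le 0 1; have := cost_le 2 2; lra.
Qed.

Lemma mass_heavyX m s u v : mass (heavyX adj R U pi m s u v) = 1.
Proof. by rewrite /heavyX; auto using mass_heavyY with mass. Qed.

Lemma exp_cost_heavyX m s u v :
  cost (heavyX adj R U pi m s u v) = s%:R * cost (heavyY adj R U pi m u v) + (c (0, 1))%:R.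
Proof.
rewrite /heavyX (exp_cost_dbind_cst c_additive (k := (c (0, 1))%:R)).
- by rewrite (exp_cost_drepeat c_additive) // mass_heavyY.
- exact: mass_drepeat (mass_heavyY _ _ _).
- by auto with mass.
- by move=> ys; rewrite (exp_cost_dtick_bind c_additive) ?exp_cost_dret ?addr0 ?mass_dret.
Qed.

Definition heavy_rounds m : nat := natceil (48%:R * ln (2%:R * (m%:R : R))).

Definition heavy_samples m (bb wb eps : R) : nat :=
  natceil (12%:R * Num.sqrt (m%:R : R) * wb / (eps ^+ 2 * bb)).

Lemma exp_cost_Heavy_le m u v bb wb eps :
  symmetric adj -> adj u v -> (0 < m)%N -> (\sum_x deg x <= 3 * m)%N ->
  cost (Heavy adj U pi u v bb wb eps m) <= 5 + (heavy_rounds m)%:R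
    * (55 * (heavy_samples m bb wb eps)%:R + 1) + (heavy_rounds m)%:R ^+ 2.
Proof.
move=> sym huv m0 hS.
set t := (heavy_rounds m)%:R; set s := (heavy_samples m bb wb eps)%:R.
have t0 : 0 <= t by [].
have s0 : 0 <= s by [].
have c23 := cost_le 2 3.
rewrite /Heavy (exp_cost_dtick_bind c_additive); last first.
  by case: ifP => _; auto using mass_heavyX with mass.
case: ifP => _; first by rewrite exp_cost_dret //; nra.
rewrite -/(heavy_rounds m) -/(heavy_samples m bb wb eps).
rewrite (exp_cost_dbind_cst c_additive (k := (c (0, heavy_rounds m * heavy_rounds m))%:R)).
- rewrite (exp_cost_drepeat c_additive) ?mass_heavyX // exp_cost_heavyX -/t -/s.
  have := cost_le 0 (heavy_rounds m * heavy_rounds m).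
  have : s * cost (heavyY adj R U pi m u v) <= s * 55.
    by rewrite ler_wpM2l // exp_cost_heavyY_le.
  move=> /(lerD (cost_le 0 1)) /(ler_wpM2l t0); rewrite natrM -/t !add0r; lra.
- exact: mass_drepeat (mass_heavyX _ _ _ _).
- by auto with mass.
- by move=> xs; rewrite (exp_cost_dtick_bind c_additive) ?exp_cost_dret ?addr0 ?mass_dret.
Qed.

End HeavyCost.

Lemma heavy_rounds_le (R : realType) m n : (0 < m)%N -> (2 * m <= n ^ 2)%N ->
  (heavy_rounds R m)%:R <= 96 * ln (n%:R : R) + 1.
Proof.
move=> m0 mn; have n0 : (0 < n)%N by case: n mn; rewrite ?muln_gt0 //=; lia.
have m2 : 1 <= 2 * (m%:R : R) by rewrite -natrM ler1n; lia.
have : ln (2 * (m%:R : R)) <= 2 * ln (n%:R : R).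
  rewrite [X in _ <= X]mulr_natl -lnXn ?ltr0n // ler_ln ?posrE ?exprn_gt0 ?ltr0n //; last lra.
  by rewrite -natrX -natrM ler_nat.
have := natceil_le (mulr_ge0 (ler0n R 48) (ln_ge0 m2)); rewrite -/(heavy_rounds R m).
lra.
Qed.

Lemma heavy_samples_le (R : realType) m (bb wb eps : R) :
  0 < bb -> 0 < eps -> 0 <= wb ->
  (heavy_samples m bb wb eps)%:R
    <= 12 * (wb * Num.sqrt (m%:R : R) / bb) * eps^-1 ^+ 2 + 1.
Proof.
move=> bb0 eps0 wb0.
have -> : 12 * (wb * Num.sqrt (m%:R : R) / bb) * eps^-1 ^+ 2
    = 12%:R * Num.sqrt (m%:R : R) * wb / (eps ^+ 2 * bb).
  by field; rewrite !gt_eqF.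
apply: natceil_le; apply: divr_ge0; last by rewrite mulr_ge0 ?exprn_ge0 ?ltW.
by rewrite !mulr_ge0 ?sqrtr_ge0.
Qed.

Lemma heavy_cost_poly (R : realFieldType) (A L t s : R) :
  0 <= A -> 1 <= L -> 0 <= t <= 96 * L -> 0 <= s <= 12 * A * L ^+ 2 + 1 ->
  5 + t * (55 * s + 1) + t ^+ 2 <= 10 ^+ 5 * (A + 1) * L ^+ 3.
Proof.
move=> A0 L1 /andP[t0 tL] /andP[s0 sAL].
have L2 : L <= L ^+ 2 by rewrite expr2; nra.
have L3 : L ^+ 2 <= L ^+ 3 by rewrite exprS; nra.
have AL : 0 <= A * L ^+ 3 by rewrite mulr_ge0 // exprn_ge0 //; lra.
have ts : t * (55 * s + 1) <= 96 * (660 * (A * L ^+ 3) + 56 * L).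
  have -> : 96 * (660 * (A * L ^+ 3) + 56 * L) = 96 * L * (55 * (12 * A * L ^+ 2 + 1) + 1).
    by ring.
  by apply: ler_pM; nra.
have tt : t ^+ 2 <= 96 * 96 * L ^+ 2.
  have -> : 96 * 96 * L ^+ 2 = (96 * L) ^+ 2 by ring.
  by rewrite lerXn2r ?nnegrE //; lra.
have -> : (10 : R) ^+ 5 * (A + 1) * L ^+ 3 = 100 * 1000 * (A * L ^+ 3) + 100 * 1000 * L ^+ 3.
  by rewrite !exprS expr0; ring.
lra.
Qed.

Lemma exp_cost_Heavy_poly (R : realType) (c : nat * nat -> nat)
    (c_additive : forall a1 a2 b1 b2,
       c (a1 + b1, a2 + b2)%N = (c (a1, a2) + c (b1, b2))%N)
    (c_le : forall a b, (c (a, b) <= a + b)%N)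
    (V : finType) (adj : rel V) (U : {set V}) (pi : V -> nat) u v (bb wb eps : R) :
  symmetric adj -> irreflexive adj -> adj u v -> 0 < bb -> 0 < eps -> 0 <= wb ->
  exp_cost c (Heavy adj U pi u v bb wb eps (nedges adj))
    <= 10 ^+ 5 * (wb * Num.sqrt ((nedges adj)%:R : R) / bb + 1)
         * (1 + ln (#|V|%:R : R) + eps^-1) ^+ 3.
Proof.
move=> sym irr huv bb0 eps0 wb0.
have m0 := nedges_gt0 sym irr huv.
have hS : (\sum_x deg adj x <= 3 * nedges adj)%N.
  by apply: leq_trans (sum_deg_le_nedges adj) _; lia.
set A := wb * _ / bb; set L := 1 + _ + _.
have A0 : 0 <= A by rewrite divr_ge0 ?mulr_ge0 ?sqrtr_ge0 // ltW.
have ln0 : 0 <= ln (#|V|%:R : R).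
  by apply: ln_ge0; rewrite ler1n; apply/card_gt0P; exists u.
have epsL : eps^-1 <= L by rewrite /L; lra.
have einv0 : 0 <= eps^-1 by rewrite invr_ge0 ltW.
apply: le_trans (exp_cost_Heavy_le c_additive c_le U pi bb wb eps sym huv m0 hS) _.
have L1 : 1 <= L by rewrite /L; lra.
apply: heavy_cost_poly => //; rewrite ler0n /=.
- have := heavy_rounds_le R m0 (double_nedges_le adj); rewrite /L; lra.
- have := heavy_samples_le (nedges adj) bb0 eps0 wb0; rewrite -/A.
  have : eps^-1 ^+ 2 <= L ^+ 2 by rewrite lerXn2r ?nnegrE //; lra.
  nra.
Qed.

Theorem lemma8 (R : realType) :
  exists (C : R) (k : nat), 0 < C /\
  forall (V : finType) (adj : rel V) (U : {set V}) (pi : V -> nat)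
         (u v : V) (bb wb eps : R),
    bipartite_graph adj U -> injective pi -> adj u v ->
    0 < bb -> 0 < eps < 1 ->
    (nwedges adj)%:R / 6%:R <= wb <= 6%:R * (nwedges adj)%:R ->
    let bound := C * (wb * Num.sqrt ((nedges adj)%:R : R) / bb + 1)
                   * (1 + ln (#|V|%:R : R) + eps^-1) ^+ k in
    exp_queries (@Heavy V adj R U pi u v bb wb eps (nedges adj)) <= bound /\
    exp_time (@Heavy V adj R U pi u v bb wb eps (nedges adj)) <= bound.
Proof.
exists (10 ^+ 5), 3%N; split; first by rewrite exprn_gt0.
move=> V adj U pi u v bb wb eps [sym [irr _]] _ huv bb0 /andP[eps0 _] /andP[wb_ge _].
have wb0 : 0 <= wb by apply: le_trans wb_ge; rewrite divr_ge0.
split.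
- exact: (exp_cost_Heavy_poly (fun _ _ _ _ => erefl) (fun a b => leq_addr b a)
            U pi sym irr huv bb0 eps0 wb0).
- exact: (exp_cost_Heavy_poly (fun _ _ _ _ => erefl) (fun a b => leq_addl a b)
            U pi sym irr huv bb0 eps0 wb0).
Qed.
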